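(* Let $\alpha=(\alpha_1,\dots,\alpha_k)$ be a composition of $n$ with $k$ parts. Fix positive integers $i_1<\dots<i_k$ and consider all words that are rearrangements of the multiset containing $i_j$ with multiplicity $\alpha_j$ for each $j$ (words with this fixed content, of packed content $\alpha$). Then the number of $\#$-Sylvester equivalence classes of these words is \[\det\left[\binom{j+\sum_{\ell=1}^i\alpha_\ell}{j-(i-1)}\right]_{1\le i,j\le k-1}\] (the empty determinant, for $k=1$, being $1$).
   Context: Words are finite sequences of positive integers; the packed content of a word is the composition listing the multiplicities of its distinct letters in increasing order of the letters. Two words $w_1,w_2$ are $\#$-Sylvester adjacent if there are words $u,v,w$ and letters $a<b\le c$ with $w_1=u\,b\,v\,a\,c\,w$ and $w_2=u\,b\,v\,c\,a\,w$. $\#$-Sylvester equivalence is the equivalence relation generated by $\#$-Sylvester adjacency. Binomial coefficients $\binom{N}{r}$ with $r<0$ are $0$. *)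

From mathcomp Require Import all_boot all_order all_algebra.
From Stdlib Require Import Relations.
Set Implicit Arguments. Unset Strict Implicit. Unset Printing Implicit Defensive.
Import GRing.Theory Num.Theory.

Definition sylv_adj (w1 w2 : seq nat) : Prop :=
  exists (u v w : seq nat) (a b c : nat),
    [/\ (a < b <= c)%N,
        w1 = u ++ b :: v ++ a :: c :: w &
        w2 = u ++ b :: v ++ c :: a :: w].

Definition sylv_equiv : seq nat -> seq nat -> Prop :=
  clos_refl_sym_trans (seq nat) sylv_adj.

Definition num_classes (W : seq nat -> Prop) (N : nat) : Prop :=
  exists reps : seq (seq nat),
    [/\ size reps = N,
        (forall r, r \in reps -> W r),
        (forall i j, (i < size reps)%N -> (j < size reps)%N -> i <> j ->
           ~ sylv_equiv (nth [::] reps i) (nth [::] reps j)) &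
        (forall w, W w -> exists2 r, r \in reps & sylv_equiv w r)].

(* The word i_1^{alpha_1} ... i_k^{alpha_k} (one word with the given content). *)
Definition content_word (idx alpha : seq nat) : seq nat :=
  flatten [seq nseq p.2 p.1 | p <- zip idx alpha].

(* binomial with negative lower index = 0 *)
Definition binz (N : nat) (r : int) : int :=
  match r with Posz m => ('C(N, m))%:Z | Negz _ => 0%R end.

(* The (k-1)x(k-1) matrix, entry (i,j) (1-indexed) =
   binom (j + sum_{l<=i} alpha_l) (j - (i-1)).  With 0-indexed i', j':
   i = i'+1, j = j'+1. *)
Definition cor_matrix (alpha : seq nat) : 'M[int]_((size alpha).-1) :=
  \matrix_(i < (size alpha).-1, j < (size alpha).-1)
    binz (j.+1 + \sum_(l < i.+1) nth 0%N alpha l)%N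
         ((j.+1)%:Z - (i.+1)%:Z + 1)%R.

(* Inserting the letters of a word from left to right into a binary search
   tree (smaller letters to the left, the others to the right) is invariant
   under #-Sylvester adjacency: in [u b v a c w], once [b] is inserted the tree
   has a node separating [a] from [c], so they may be inserted in either order.
   Conversely, with [b] the first letter [x], the letters below [x] can be
   moved left across the letters [>= x]; so every word is equivalent to some
   [x u v] with [u < x <= v], recursively. These canonical words are the
   preorder readings of their trees, hence pairwise inequivalent, and choosing
   the root letter shows that their number satisfies the recursion
   [F alpha = sum_r F alpha_(<r) * F alpha'_(>r)]. The number of chains
   [y_1 <= ... <= y_(k-1)] bounded by the partial sums of [alpha] satisfies
   the same recursion. Finally the matrix is Hessenberg with unit subdiagonal,
   and the hockey-stick identity shows that the combination of its rows with
   the alternating chain numbers of the prefixes of the partial sums vanishes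
   in every column but the last; this evaluates the determinant. *)

From mathcomp Require Import all_boot all_algebra ring zify.
From Stdlib Require Import Relations.
Import GRing.Theory.
Set Implicit Arguments. Unset Strict Implicit. Unset Printing Implicit Defensive.

(** * Binary search trees and #-Sylvester equivalence *)

Inductive bstree := Leaf | Node of nat & bstree & bstree.

Fixpoint insert (x : nat) (t : bstree) : bstree :=
  match t with
  | Leaf => Node x Leaf Leaf
  | Node r l s => if x < r then Node r (insert x l) s else Node r l (insert x s)
  end.

Definition insert_seq (t : bstree) (w : seq nat) : bstree :=
  foldl (fun t x => insert x t) t w.

Definition bst (w : seq nat) : bstree := insert_seq Leaf w.

Fixpoint preorder (t : bstree) : seq nat :=
  if t is Node x l s then x :: preorder l ++ preorder s else [::].

(* The insertion paths of [a] and [c] in [t] part at a node [r] with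
   [a < r <= c], so that inserting [a] and inserting [c] commute. *)
Fixpoint separated (a c : nat) (t : bstree) : bool :=
  if t is Node r l s then
    [|| (a < r <= c), (c < r) && separated a c l | (r <= a) && separated a c s]
  else false.

Lemma insertC a c t :
  a < c -> separated a c t -> insert c (insert a t) = insert a (insert c t).
Proof.
move=> lt_ac; elim: t => [|r l IHl s IHs] //=.
case/or3P=> [/andP[lt_ar le_rc] | /andP[lt_cr sep_l] | /andP[le_ra sep_s]].
- by rewrite lt_ar ltnNge le_rc /= lt_ar ltnNge le_rc.
- have lt_ar : a < r by apply: ltn_trans lt_cr.
  by rewrite lt_ar lt_cr /= lt_cr lt_ar IHl.
- have [nlt_ar nlt_cr] : a < r = false /\ c < r = false by split; lia.
  by rewrite nlt_ar nlt_cr /= nlt_cr nlt_ar IHs.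
Qed.

Lemma separated_insert a c x t : separated a c t -> separated a c (insert x t).
Proof.
elim: t => [|r l IHl s IHs] //=; case: (x < r) => /=.
  by case/or3P=> [-> | /andP[-> /IHl->] | /andP[-> ->]]; rewrite /= ?orbT.
by case/or3P=> [-> | /andP[-> ->] | /andP[-> /IHs->]]; rewrite /= ?orbT.
Qed.

Lemma separated_insert_seq a c t w :
  separated a c t -> separated a c (insert_seq t w).
Proof. by elim: w t => [|x w IHw] t //= /(separated_insert x); apply: IHw. Qed.

Lemma separated_insert_between a b c t : a < b <= c -> separated a c (insert b t).
Proof.
move=> /andP[lt_ab le_bc]; elim: t => [|r l IHl s IHs] /=; first by rewrite lt_ab le_bc.
case: ifP => [lt_br | /negbT] /=; last rewrite -leqNgt => le_rb.
  by case: (leqP r c) => _; rewrite ?(ltn_trans lt_ab lt_br) ?IHl ?orbT.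
by case: (ltnP a r) => _; rewrite ?(leq_trans le_rb le_bc) ?IHs ?orbT.
Qed.

Lemma bst_sylv_adj w1 w2 : sylv_adj w1 w2 -> bst w1 = bst w2.
Proof.
case=> u [v [w [a [b [c [/andP[lt_ab le_bc] -> ->]]]]]].
rewrite /bst /insert_seq -!cat_cons !foldl_cat /= insertC ?(leq_trans lt_ab) //.
by apply: separated_insert_seq; apply: separated_insert_between; rewrite lt_ab.
Qed.

Lemma bst_sylv_equiv w1 w2 : sylv_equiv w1 w2 -> bst w1 = bst w2.
Proof. by elim=> [? ? /bst_sylv_adj | | ? ? _ -> | ? ? ? _ -> _]. Qed.

Lemma insert_seq_Node x l s w :
  insert_seq (Node x l s) w =
  Node x (insert_seq l [seq y <- w | y < x]) (insert_seq s [seq y <- w | x <= y]).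
Proof.
rewrite /insert_seq; elim: w l s => [|y w IHw] l s //=.
by case: (ltnP y x) => _ /=; rewrite IHw.
Qed.

Lemma filter_all_predC (T : Type) (a : pred T) s : all (predC a) s -> filter a s = [::].
Proof. by elim: s => //= x s IHs /andP[/negbTE-> /IHs]. Qed.

Lemma bst_cons_cat x u v : all (fun y => y < x) u -> all (fun y => x <= y) v ->
  bst (x :: u ++ v) = Node x (bst u) (bst v).
Proof.
move=> u_lt v_ge; rewrite /bst [insert_seq _ _]/= insert_seq_Node !filter_cat.
have v_nlt : all (predC (fun y => y < x)) v.
  by apply: sub_all v_ge => y /=; rewrite -leqNgt.
have u_nge : all (predC (fun y => x <= y)) u.
  by apply: sub_all u_lt => y /=; rewrite -ltnNge.
rewrite (all_filterP u_lt) (all_filterP v_ge).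
by rewrite (filter_all_predC v_nlt) (filter_all_predC u_nge) cats0.
Qed.

Lemma sylv_adj_cat p q s t : sylv_adj s t -> sylv_adj (p ++ s ++ q) (p ++ t ++ q).
Proof.
case=> u [v [w [a [b [c [abc -> ->]]]]]].
by exists (p ++ u), v, (w ++ q), a, b, c; split=> //; rewrite -!catA /= -!catA.
Qed.

Lemma sylv_equiv_cat p q s t : sylv_equiv s t -> sylv_equiv (p ++ s ++ q) (p ++ t ++ q).
Proof.
elim=> [? ? /(sylv_adj_cat p q) | ? | ? ? _ | ? ? ? _ IH1 _].
- exact: rst_step.
- exact: rst_refl.
- exact: rst_sym.
- exact: rst_trans IH1.
Qed.

(* Each step swaps [c y] into [y c] by an adjacency with [b := x]. *)
Lemma sylv_equiv_shift x y l h s : y < x -> all (fun z => x <= z) h ->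
  sylv_equiv (x :: l ++ h ++ y :: s) (x :: l ++ y :: h ++ s).
Proof.
move=> lt_yx; elim/last_ind: h s => [|h c IHh] s; first by move=> _; apply: rst_refl.
rewrite all_rcons => /andP[le_xc h_ge].
apply: (@rst_trans _ _ _ (x :: l ++ h ++ y :: c :: s)).
  apply/rst_sym/rst_step; exists [::], (l ++ h), s, y, x, c.
  by rewrite lt_yx le_xc /= -!catA cat_rcons.
by rewrite cat_rcons; apply: IHh.
Qed.

Lemma sylv_equiv_partition x l h s :
  all (fun z => z < x) l -> all (fun z => x <= z) h ->
  sylv_equiv (x :: l ++ h ++ s)
             (x :: (l ++ [seq z <- s | z < x]) ++ h ++ [seq z <- s | x <= z]).
Proof.
elim: s l h => [|y s IHs] l h l_lt h_ge /=; first by rewrite !cats0; apply: rst_refl.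
case: (ltnP y x) => [lt_yx | le_xy] /=.
  apply: rst_trans (sylv_equiv_shift l s lt_yx h_ge) _.
  have := IHs (rcons l y) h; rewrite all_rcons lt_yx l_lt => /(_ isT h_ge).
  by rewrite -cats1 -!catA.
have := IHs l (rcons h y) l_lt; rewrite all_rcons le_xy h_ge => /(_ isT).
by rewrite -cats1 -!catA.
Qed.

Lemma sylv_equiv_cons_partition x s :
  sylv_equiv (x :: s) (x :: [seq z <- s | z < x] ++ [seq z <- s | x <= z]).
Proof. exact: (@sylv_equiv_partition x [::] [::] s). Qed.

Open Scope ring_scope.

(** * Counting bounded chains *)

(* [chainw lo S g] sums [g y_m] over the chains [lo <= y_1 <= ... <= y_m] of
   naturals with [y_i <= S_i] ([m = size S]); it is [g lo] when [S] is empty. *)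
Fixpoint chainw (lo : nat) (S : seq nat) (g : nat -> int) : int :=
  if S is s :: S' then \sum_(lo <= y < s.+1) chainw y S' g else g lo.

Definition nchains (lo : nat) (S : seq nat) : int := chainw lo S (fun=> 1).

Lemma chainw_rcons lo S s g :
  chainw lo (rcons S s) g = chainw lo S (fun a => \sum_(a <= y < s.+1) g y).
Proof. by elim: S lo => [|x S IHS] lo //=; apply: eq_bigr => y _; rewrite IHS. Qed.

Lemma eq_chainw lo S g1 g2 : (forall y, (y <= last lo S)%N -> g1 y = g2 y) ->
  chainw lo S g1 = chainw lo S g2.
Proof.
elim: S lo => [|x S IHS] lo eq_g /=; first exact: eq_g.
apply: eq_big_nat => y /andP[_ le_yx]; apply: IHS => z le_z; apply: eq_g.
by case: S le_z => [|t S] //= /leq_trans->.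
Qed.

Lemma chainwB lo S (c : int) g1 g2 :
  chainw lo S (fun y => c * g1 y - g2 y) = c * chainw lo S g1 - chainw lo S g2.
Proof.
elim: S lo => [|x S IHS] lo //=.
by under eq_bigr do rewrite IHS; rewrite sumrB mulr_sumr.
Qed.

Lemma hockey_stick a n d l : (a <= n)%N ->
  \sum_(a <= y < n) ('C(y + d, l))%:Z = ('C(n + d, l.+1))%:Z - ('C(a + d, l.+1))%:Z.
Proof.
elim: n => [|n IHn]; first by rewrite leqn0 => /eqP->; rewrite big_geq ?subrr.
rewrite leq_eqVlt => /orP[/eqP-> | le_an]; first by rewrite big_geq ?subrr.
by rewrite big_nat_recr // IHn // addSn binS PoszD addrAC.
Qed.

Lemma last_take_leq_nth S j : sorted leq S -> (j < size S)%N ->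
  (last 0%N (take j S) <= nth 0%N S j)%N.
Proof.
move=> sorted_S lt_jS; case: j lt_jS => [|j] lt_jS; first by rewrite take0.
rewrite -nth_last size_take lt_jS /= nth_take //.
by apply: (sorted_leq_nth leq_trans leqnn) => //; rewrite inE // ltnW.
Qed.

Lemma chainw_bin S j d l : sorted leq S -> (j <= size S)%N ->
  (-1) ^+ j * chainw 0 (take j S) (fun y => ('C(y + d, l))%:Z) =
  ('C(d, l + j))%:Z -
  \sum_(i < j) (-1) ^+ i * ('C(nth 0%N S i + d + 1, l + j - i))%:Z * nchains 0 (take i S).
Proof.
move=> sorted_S; elim: j l => [|j IHj] l le_jS.
  by rewrite big_ord0 subr0 expr0 mul1r take0 addn0.
rewrite (take_nth 0 le_jS) chainw_rcons.
set s := nth 0%N S j.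
rewrite (@eq_chainw _ _ _ (fun a => ('C(s.+1 + d, l.+1))%:Z * 1 - ('C(a + d, l.+1))%:Z));
  last first.
  move=> y le_y; rewrite mulr1 hockey_stick //.
  exact/leqW/(leq_trans le_y)/last_take_leq_nth.
rewrite chainwB exprS mulrBr mulrA !mulN1r !mulNr opprK IHj ?(ltnW le_jS) //.
rewrite big_ord_recr /= -/s /nchains (addSn s) addn1 addSnnS.
have -> : (l + j.+1 - j = l.+1)%N by rewrite -addSnnS addnK.
ring.
Qed.

Lemma alternating_bin_sum S j : sorted leq S -> (j < size S)%N ->
  \sum_(i < j.+1) (-1) ^+ i * ('C(nth 0%N S i + j.+1, j.+1 - i))%:Z * nchains 0 (take i S)
  = (-1) ^+ j * nchains 0 (take j.+1 S).
Proof.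
move=> sorted_S lt_jS; have := chainw_bin j 0 sorted_S lt_jS.
rewrite (@eq_chainw _ _ _ (fun=> 1)) => [|y _]; last by rewrite bin0.
rewrite add0n bin_small // sub0r exprS mulN1r mulNr => /oppr_inj->.
by apply: eq_bigr => i _; rewrite addn1 addnS.
Qed.

(** * The determinant *)

Section HessenbergDeterminant.

Variables (R : comPzRingType) (m : nat) (M : 'M[R]_m.+1) (F : nat -> R).
Hypothesis F0 : F 0%N = 1.
Hypothesis M_hessenberg : forall i j : 'I_m.+1, (j.+1 < i)%N -> M i j = 0.
Hypothesis M_subdiag : forall i j : 'I_m.+1, i = j.+1 :> nat -> M i j = 1.
Hypothesis M_cols : forall j : 'I_m.+1,
  \sum_(i < m.+1) (-1) ^+ i * M i j * F i =
  if j == ord_max then (-1) ^+ m * F m.+1 else 0.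

Lemma det_hessenberg_minor : \det (row' ord0 (col' ord_max M)) = 1.
Proof.
rewrite -det_tr det_trig; last first.
  by apply/is_trig_mxP => i j lt_ij; rewrite !mxE M_hessenberg // lift_max lift0.
by apply: big1 => i _; rewrite !mxE M_subdiag // lift_max lift0.
Qed.

(* Left multiplication by the unitriangular [P], whose first row is
   [((-1)^j F j)_j], clears the first row of [M] but for its last entry. *)
Lemma det_hessenberg : \det M = F m.+1.
Proof.
pose P : 'M[R]_m.+1 :=
  \matrix_(i, j) if i == ord0 then (-1) ^+ j * F j else (i == j)%:R.
have detP : \det P = 1.
  rewrite -det_tr det_trig; last first.
    apply/is_trig_mxP => i j lt_ij; rewrite !mxE.
    case: eqP => [j0 | _]; first by move: lt_ij; rewrite j0.
    by rewrite -val_eqE gtn_eqF.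
  by apply: big1 => i _; rewrite !mxE eqxx; case: eqP => // ->; rewrite mul1r.
have PM0 j : (P *m M) ord0 j = if j == ord_max then (-1) ^+ m * F m.+1 else 0.
  by rewrite mxE -M_cols; apply: eq_bigr => i _; rewrite mxE mulrAC.
have PM_lift i j : (P *m M) (lift ord0 i) j = M (lift ord0 i) j.
  have li_neq0 : (lift ord0 i == ord0) = false by rewrite -val_eqE.
  rewrite mxE (bigD1 (lift ord0 i)) //= big1 => [|k nk]; rewrite !mxE li_neq0.
    by rewrite eqxx mul1r addr0.
  by rewrite eq_sym (negPf nk) mul0r.
rewrite -[LHS]mul1r -detP -det_mulmx (expand_det_row _ ord0) (bigD1 ord_max) //=.
rewrite big1 => [|j nj]; last by rewrite PM0 (negPf nj) mul0r.
rewrite PM0 eqxx addr0 /cofactor.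
have -> : row' ord0 (col' ord_max (P *m M)) = row' ord0 (col' ord_max M).
  by apply/matrixP => i j; rewrite [LHS]mxE [LHS]mxE PM_lift !mxE.
by rewrite det_hessenberg_minor mulr1 add0n mulrAC -expr2 sqrr_sign mul1r.
Qed.

End HessenbergDeterminant.

Lemma binz_lt0 N i j : (j.+1 < i)%N -> binz N ((j.+1)%:Z - (i.+1)%:Z + 1) = 0.
Proof.
move=> lt_ji; have : (j.+1)%:Z - (i.+1)%:Z + 1 < 0 by lia.
by case: (_ - _ + _).
Qed.

Lemma binz_ge0 N i j : (i <= j.+1)%N ->
  binz N ((j.+1)%:Z - (i.+1)%:Z + 1) = ('C(N, j.+1 - i))%:Z.
Proof. by move=> le_ij; have -> : (j.+1)%:Z - (i.+1)%:Z + 1 = (j.+1 - i)%N by lia. Qed.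

Section BinomialHessenberg.

Variables (S : seq nat) (m : nat).
Hypotheses (sorted_S : sorted leq S) (size_S : size S = m.+1).

Lemma bin_hessenberg_col (j : 'I_m.+1) :
  \sum_(i < m.+1)
     (-1) ^+ i * binz (j.+1 + nth 0%N S i) ((j.+1)%:Z - (i.+1)%:Z + 1) * nchains 0 (take i S)
  = if j == ord_max then (-1) ^+ m * nchains 0 (take m.+1 S) else 0.
Proof.
pose G i := (-1) ^+ i * binz (j.+1 + nth 0%N S i) ((j.+1)%:Z - (i.+1)%:Z + 1) *
            nchains 0 (take i S).
rewrite -(big_mkord xpredT G) (big_cat_nat (n := j.+1)) ?ltn_ord //=.
have -> : \sum_(0 <= i < j.+1) G i = (-1) ^+ j * nchains 0 (take j.+1 S).
  rewrite -alternating_bin_sum ?size_S // big_mkord.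
  by apply: eq_bigr => i _; rewrite /G binz_ge0 1?addnC // ltnW.
case: eqP => [-> | /eqP nj]; first by rewrite big_geq ?addr0.
have lt_jm : (j < m)%N.
  rewrite ltn_neqAle -ltnS ltn_ord andbT.
  by apply: contra nj => /eqP j_m; apply/eqP/val_inj.
rewrite big_ltn // big_nat big1 => [|i /andP[lt_ji _]]; last by rewrite /G binz_lt0 ?mulr0 ?mul0r.
by rewrite /G binz_ge0 // subnn bin0 mulr1 exprS addr0 mulN1r mulNr addrN.
Qed.

Lemma det_bin_hessenberg :
  \det (\matrix_(i < m.+1, j < m.+1)
          binz (j.+1 + nth 0%N S i) ((j.+1)%:Z - (i.+1)%:Z + 1)) = nchains 0 S.
Proof.
rewrite -[in RHS](take_size S) size_S.
apply: (det_hessenberg (F := fun i => nchains 0 (take i S))) => [| i j | i j i_j | j].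
- by rewrite take0.
- by rewrite mxE => /binz_lt0.
- by rewrite mxE i_j binz_ge0 // subnn bin0.
- by rewrite -bin_hessenberg_col; apply: eq_bigr => i _; rewrite mxE.
Qed.

End BinomialHessenberg.

Lemma sumn_take (a : seq nat) i : sumn (take i a) = \sum_(l < i) nth 0%N a l.
Proof.
elim: a i => [|x a IHa] [|i] /=; rewrite ?big_ord0 //.
  by rewrite big1 // => l; rewrite nth_nil.
by rewrite big_ord_recl IHa.
Qed.

(* [psums c a = [:: c + a_1; c + a_1 + a_2; ...]] stops before the total sum. *)
Fixpoint psums (c : nat) (a : seq nat) : seq nat :=
  if a is x :: a' then (if a' is [::] then [::] else (c + x)%N :: psums (c + x) a')
  else [::].

Lemma psums_cons2 c x y a : psums c [:: x, y & a] = (c + x)%N :: psums (c + x) (y :: a).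
Proof. by []. Qed.

Lemma size_psums c a : size (psums c a) = (size a).-1.
Proof. by elim: a c => [|x [|y a] IHa] c //=; rewrite IHa. Qed.

Lemma nth_psums c a i : (i < (size a).-1)%N ->
  nth 0%N (psums c a) i = (c + sumn (take i.+1 a))%N.
Proof.
elim: a c i => [|x [|y a] IHa] c [|i] //= lt_i; first by rewrite addn0.
by rewrite IHa // addnA.
Qed.

Lemma sorted_psums c a : sorted leq (psums c a).
Proof.
elim: a c => [|x [|y a] IHa] c //=.
by have := IHa (c + x)%N; case: a {IHa} => [|z a] //= ->; rewrite leq_addr.
Qed.

Lemma psumsD c d a : psums (c + d) a = map (addn c) (psums d a).
Proof. by elim: a d => [|x [|y a] IHa] d //; rewrite !psums_cons2 -addnA IHa. Qed.

Lemma take_psums c a L : psums c (take L.+1 a) = take L (psums c a).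
Proof.
elim: a c L => [|x [|y a] IHa] c [|L] //.
by rewrite psums_cons2 /= -IHa.
Qed.

Lemma drop_psums c a r : (r < size a)%N ->
  drop r (psums c a) = psums (c + sumn (take r a)) (drop r a).
Proof.
elim: a c r => [|x [|y a] IHa] c [|r] //= lt_r; rewrite ?addn0 //.
by rewrite IHa // addnA.
Qed.

Lemma psums_cons_pred c x a : (0 < x)%N -> psums c (x :: a) = psums c.+1 (x.-1 :: a).
Proof. by move=> x_gt0 /=; case: a => // y a; rewrite addSnnS prednK. Qed.

(* The number of chains [y_1 <= ... <= y_(k-1)] with [y_i <= a_1 + ... + a_i];
   [nbst_rec] is the recursion of binary search trees with content [a]. *)
Definition nbst (a : seq nat) : int := nchains 0 (psums 0 a).

Lemma det_cor_matrix alpha : \det (cor_matrix alpha) = nbst alpha.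
Proof.
rewrite /cor_matrix /nbst; case E: (size alpha).-1 => [|m].
  by rewrite det_mx00; have := size_psums 0 alpha; rewrite E => /size0nil->.
have size_S : size (psums 0 alpha) = m.+1 by rewrite size_psums E.
rewrite -(det_bin_hessenberg (sorted_psums 0 alpha) size_S); congr (\det _).
by apply/matrixP => i j; rewrite !mxE nth_psums ?E // add0n sumn_take.
Qed.

(** * The binary search tree recursion *)

Lemma nchains_cons lo s S : nchains lo (s :: S) = \sum_(lo <= y < s.+1) nchains y S.
Proof. by []. Qed.

Lemma nchains_split S lo : sorted leq S -> (lo <= head lo S)%N ->
  nchains lo S = nchains lo.+1 S +
    \sum_(L < size S) nchains lo (take L S) * nchains (nth 0%N S L).+1 (drop L.+1 S).
Proof.
elim: S lo => [|s S IHS] lo sorted_sS le_lo /=; first by rewrite big_ord0 addr0.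
have IH y : (y < s.+1)%N -> nchains y S = nchains y.+1 S +
    \sum_(L < size S) nchains y (take L S) * nchains (nth 0%N S L).+1 (drop L.+1 S).
  move=> lt_ys; apply: IHS; first exact: path_sorted sorted_sS.
  case: S {le_lo} sorted_sS => [|t S] //= /andP[le_st _].
  by rewrite ltnS in lt_ys; apply: leq_trans le_st.
rewrite [LHS](eq_big_nat _ _ (fun y y_in => IH y (proj2 (andP y_in)))) big_split /=.
have -> : \sum_(lo <= y < s.+1) nchains y.+1 S =
          \sum_(lo.+1 <= y < s.+1) nchains y S + nchains s.+1 S.
  by rewrite -big_nat_recr //= big_add1.
rewrite big_ord_recl /= mul1r drop0 -!addrA; congr (_ + (_ + _)).
rewrite exchange_big /=; apply: eq_bigr => L _.
by rewrite -big_distrl.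
Qed.

Lemma nchains_shift c S lo : nchains (c + lo) (map (addn c) S) = nchains lo S.
Proof.
elim: S lo => [|s S IHS] lo //; rewrite [map _ _]/= !nchains_cons.
rewrite -addnS [(c + lo)%N]addnC [(c + s.+1)%N]addnC big_addn addnK.
by apply: eq_bigr => y _; rewrite addnC IHS.
Qed.

Lemma nbst_cons0 a : nbst (0%N :: a) = nbst a.
Proof. by rewrite /nbst; case: a => // y a; rewrite psums_cons2 add0n nchains_cons big_nat1. Qed.

(* The content right of the root after removing one copy of the [r]-th letter;
   a multiplicity that drops to [0] is removed. *)
Definition rcontent r (a : seq nat) : seq nat :=
  if nth 0%N a r == 1%N then drop r.+1 a else (nth 0%N a r).-1 :: drop r.+1 a.

Lemma nbst_rcontent a r : (r < size a)%N -> (0 < nth 0%N a r)%N ->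
  nbst (rcontent r a) = nchains (sumn (take r a)).+1 (drop r (psums 0 a)).
Proof.
move=> lt_ra ar_gt0.
rewrite drop_psums // add0n (drop_nth 0%N lt_ra) psums_cons_pred //.
rewrite -[X in psums X _]addn0 psumsD -[X in nchains X _]addn0 nchains_shift /rcontent.
by case: eqP => [-> | _] //; exact/esym/nbst_cons0.
Qed.

Lemma nbst_rec a : (0 < size a)%N -> all (fun x => 0 < x)%N a ->
  nbst a = \sum_(r < size a) nbst (take r a) * nbst (rcontent r a).
Proof.
case: a => [|x a] // _ a_gt0.
have nth_gt0 r : (r < size (x :: a))%N -> (0 < nth 0%N (x :: a) r)%N.
  by move=> lt_r; apply: (allP a_gt0); apply: mem_nth.
rewrite {1}/nbst (nchains_split (sorted_psums 0 _) (leq0n _)) size_psums.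
rewrite big_ord_recl take0 mul1r nbst_rcontent ?nth_gt0 // take0 drop0.
congr (_ + _); apply: eq_bigr => L _.
have lt_L : (L.+1 < size (x :: a))%N by rewrite ltnS.
rewrite lift0 nbst_rcontent ?nth_gt0 // /nbst take_psums.
by rewrite nth_psums ?add0n.
Qed.

(** * Canonical words *)

Definition valid_content (idx a : seq nat) :=
  [/\ size idx = size a, sorted ltn idx & all (fun x => 0 < x)%N a].

Definition rletters r (idx a : seq nat) : seq nat :=
  if nth 0%N a r == 1%N then drop r.+1 idx else drop r idx.

Lemma valid_content_take idx a r :
  valid_content idx a -> valid_content (take r idx) (take r a).
Proof.
case=> size_idx sorted_idx a_gt0; split; first by rewrite !size_take size_idx.
  exact: take_sorted.
by apply/allP => y /mem_take/(allP a_gt0).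
Qed.

Lemma valid_content_right idx a r : valid_content idx a -> (r < size a)%N ->
  valid_content (rletters r idx a) (rcontent r a).
Proof.
case=> size_idx sorted_idx a_gt0 lt_r; rewrite /rletters /rcontent.
have drop_gt0 : all (fun x => 0 < x)%N (drop r.+1 a).
  by apply/allP => y /mem_drop/(allP a_gt0).
have := allP a_gt0 _ (mem_nth 0%N lt_r).
case: eqP => [_ | ar_neq1] ar_gt0; split; rewrite ?drop_sorted ?size_drop ?size_idx //=.
  by rewrite size_drop; lia.
by rewrite drop_gt0 andbT; case: (nth 0%N a r) ar_gt0 ar_neq1 => [|[|k]].
Qed.

Lemma sumn_take_rcontent a r : (r < size a)%N -> (0 < nth 0%N a r)%N ->
  (sumn (take r a) + sumn (rcontent r a)).+1 = sumn a.
Proof.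
move=> lt_r ar_gt0; rewrite /rcontent -[in RHS](cat_take_drop r a) sumn_cat.
by rewrite (drop_nth 0%N lt_r); case: eqP => [-> | _] /=; lia.
Qed.

Lemma content_word_cons i idx x a :
  content_word (i :: idx) (x :: a) = nseq x i ++ content_word idx a.
Proof. by []. Qed.

Lemma content_word_nil idx : content_word idx [::] = [::].
Proof. by case: idx. Qed.

Lemma mem_content_word y idx a : y \in content_word idx a -> y \in idx.
Proof.
elim: idx a => [|i idx IHidx] [|x a] //=.
rewrite content_word_cons mem_cat inE => /orP[/nseqP[-> _] | /IHidx->];
  by rewrite ?eqxx ?orbT.
Qed.

Lemma mem_content_word_nth y idx a : size idx = size a -> y \in content_word idx a ->
  exists2 r, (r < size a)%N & y = nth 0%N idx r.
Proof.
elim: idx a => [|i idx IHidx] [|x a] //= [size_idx].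
rewrite content_word_cons mem_cat => /orP[/nseqP[-> _] | /(IHidx _ size_idx)[r lt_r ->]].
  by exists 0%N.
by exists r.+1.
Qed.

Lemma content_word_split idx a r : size idx = size a -> (r < size a)%N ->
  content_word idx a = content_word (take r idx) (take r a) ++
    nseq (nth 0%N a r) (nth 0%N idx r) ++ content_word (drop r.+1 idx) (drop r.+1 a).
Proof.
elim: r idx a => [|r IHr] [|i idx] [|x a] //= [size_idx] lt_r; first by rewrite !drop0.
by rewrite !content_word_cons IHr // catA.
Qed.

Lemma content_word_root idx a r : size idx = size a -> (r < size a)%N ->
  (0 < nth 0%N a r)%N ->
  content_word idx a = content_word (take r idx) (take r a) ++
    nth 0%N idx r :: content_word (rletters r idx a) (rcontent r a).
Proof.
move=> size_idx lt_r ar_gt0; rewrite (content_word_split size_idx lt_r).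
rewrite /rletters /rcontent; case: eqP => [-> | ar_neq1] //.
rewrite (drop_nth 0%N (_ : r < size idx)%N) ?size_idx // content_word_cons.
by case: (nth 0%N a r) ar_gt0 ar_neq1 => [|[|k]].
Qed.

Lemma content_word_take_lt idx a r : sorted ltn idx -> (r < size idx)%N ->
  all (fun y => y < nth 0%N idx r)%N (content_word (take r idx) (take r a)).
Proof.
rewrite (sorted_pairwise ltn_trans) => sorted_idx lt_r.
move: sorted_idx; rewrite -{1}(cat_take_drop r idx) (drop_nth 0%N lt_r) pairwise_cat.
case/and3P=> /allrelP lt_root _ _; apply/allP => y /mem_content_word y_in.
by apply: lt_root; rewrite ?mem_head.
Qed.

Lemma content_word_rletters_ge idx a r : sorted ltn idx -> (r < size idx)%N ->
  all (fun y => nth 0%N idx r <= y)%N (content_word (rletters r idx a) (rcontent r a)).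
Proof.
rewrite (sorted_pairwise ltn_trans) => sorted_idx lt_r.
move: sorted_idx; rewrite -{1}(cat_take_drop r idx) (drop_nth 0%N lt_r) pairwise_cat.
case/and3P=> _ _ /andP[/allP gt_root _]; apply/allP => y /mem_content_word.
rewrite /rletters (drop_nth 0%N lt_r); case: ifP => _; first by move/gt_root/ltnW.
by rewrite inE => /orP[/eqP-> // | /gt_root/ltnW].
Qed.

Lemma perm_content_word_partition idx a r w : valid_content idx a -> (r < size a)%N ->
  perm_eq (nth 0%N idx r :: w) (content_word idx a) ->
  perm_eq [seq z <- w | z < nth 0%N idx r]%N (content_word (take r idx) (take r a)) /\
  perm_eq [seq z <- w | nth 0%N idx r <= z]%N (content_word (rletters r idx a) (rcontent r a)).
Proof.
case=> size_idx sorted_idx a_gt0 lt_r.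
have lt_ri : (r < size idx)%N by rewrite size_idx.
rewrite (content_word_root size_idx lt_r) ?(allP a_gt0) ?mem_nth //.
set y := nth 0%N idx r; set L := content_word _ _; set R := content_word _ _.
have L_lt : all (fun z => z < y)%N L by apply: content_word_take_lt.
have R_ge : all (fun z => y <= z)%N R by apply: content_word_rletters_ge.
have R_nlt : all (predC (fun z => z < y)%N) R.
  by apply: sub_all R_ge => z /=; rewrite -leqNgt.
have L_nge : all (predC (fun z => y <= z)%N) L.
  by apply: sub_all L_lt => z /=; rewrite -ltnNge.
move=> perm_w; split.
  move/(perm_filter (fun z => z < y)%N): perm_w; rewrite filter_cat /= ltnn.
  by rewrite (all_filterP L_lt) (filter_all_predC R_nlt) cats0.
move/(perm_filter (fun z => y <= z)%N): perm_w.
by rewrite filter_cat (filter_all_predC L_nge) /= leqnn perm_cons (all_filterP R_ge).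
Qed.

(* [n] is recursion fuel; it suffices once it bounds the length [sumn a]. *)
Fixpoint canon_words (n : nat) (idx a : seq nat) : seq (seq nat) :=
  if n is n'.+1 then
    if a is [::] then [:: [::]] else
    flatten [seq [seq nth 0%N idx r :: u ++ v
                 | u <- canon_words n' (take r idx) (take r a),
                   v <- canon_words n' (rletters r idx a) (rcontent r a)]
            | r <- iota 0 (size a)]
  else [:: [::]].

Lemma canon_words_nil n idx : canon_words n idx [::] = [:: [::]].
Proof. by case: n. Qed.

Lemma canon_words_cons n idx x a : canon_words n.+1 idx (x :: a) =
  flatten [seq [seq nth 0%N idx r :: u ++ v
               | u <- canon_words n (take r idx) (take r (x :: a)),
                 v <- canon_words n (rletters r idx (x :: a)) (rcontent r (x :: a))]
          | r <- iota 0 (size (x :: a))].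
Proof. by []. Qed.

Lemma mem_canon_wordsP n idx x a w :
  reflect (exists r u v,
             [/\ (r < size (x :: a))%N,
                 u \in canon_words n (take r idx) (take r (x :: a)),
                 v \in canon_words n (rletters r idx (x :: a)) (rcontent r (x :: a)) &
                 w = nth 0%N idx r :: u ++ v])
          (w \in canon_words n.+1 idx (x :: a)).
Proof.
apply: (iffP flatten_mapP) => [[r] | [r [u [v [lt_r u_in v_in ->]]]]].
  by rewrite mem_iota => /andP[_ lt_r] /allpairsP[[u v] /= [u_in v_in ->]]; exists r, u, v.
by exists r; [rewrite mem_iota | apply/allpairsP; exists (u, v)].
Qed.

Lemma canon_words_sub n idx a r : valid_content idx a -> (sumn a <= n.+1)%N ->
  (r < size a)%N ->
  [/\ valid_content (take r idx) (take r a), (sumn (take r a) <= n)%N,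
      valid_content (rletters r idx a) (rcontent r a) & (sumn (rcontent r a) <= n)%N].
Proof.
move=> va sum_a lt_r; have [_ _ a_gt0] := va.
have := sumn_take_rcontent lt_r (allP a_gt0 _ (mem_nth 0%N lt_r)).
split; [exact: valid_content_take | lia | exact: valid_content_right | lia].
Qed.

Lemma canon_words_ind (P : nat -> seq nat -> seq nat -> Prop) :
  (forall n idx, P n idx [::]) ->
  (forall n idx x a, valid_content idx (x :: a) -> (sumn (x :: a) <= n.+1)%N ->
     (forall r, (r < size (x :: a))%N ->
        P n (take r idx) (take r (x :: a)) /\
        P n (rletters r idx (x :: a)) (rcontent r (x :: a))) ->
     P n.+1 idx (x :: a)) ->
  forall n idx a, valid_content idx a -> (sumn a <= n)%N -> P n idx a.
Proof.
move=> P_nil P_cons; elim=> [|n IHn] idx [|x a] va sum_a; try exact: P_nil.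
  by case: va => _ _ /andP[x_gt0 _]; move: sum_a => /=; lia.
apply: P_cons => // r lt_r.
by have [va_l sum_l va_r sum_r] := canon_words_sub va sum_a lt_r; split; apply: IHn.
Qed.

Lemma perm_canon_words n idx a : valid_content idx a -> (sumn a <= n)%N ->
  forall w, w \in canon_words n idx a -> perm_eq w (content_word idx a).
Proof.
move: n idx a; apply: canon_words_ind => [n idx w | n idx x a va _ IH w].
  by rewrite canon_words_nil content_word_nil inE => /eqP->.
case/mem_canon_wordsP => r [u [v [lt_r u_in v_in ->]]].
have [size_idx _ a_gt0] := va; have [perm_u perm_v] := IH r lt_r.
rewrite (content_word_root size_idx lt_r) ?(allP a_gt0) ?mem_nth // -cat1s perm_catCA.
by apply: perm_cat; [exact: perm_u | rewrite /= perm_cons; exact: perm_v].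
Qed.

Lemma canon_words_preorder n idx a : valid_content idx a -> (sumn a <= n)%N ->
  forall w, w \in canon_words n idx a -> preorder (bst w) = w.
Proof.
move: n idx a; apply: canon_words_ind => [n idx w | n idx x a va sum_a IH w].
  by rewrite canon_words_nil inE => /eqP->.
case/mem_canon_wordsP => r [u [v [lt_r u_in v_in ->]]].
have [va_l sum_l va_r sum_r] := canon_words_sub va sum_a lt_r.
have [size_idx sorted_idx _] := va; have [pre_u pre_v] := IH r lt_r.
have lt_ri : (r < size idx)%N by rewrite size_idx.
rewrite bst_cons_cat /=; first by rewrite pre_u ?pre_v.
  by rewrite (perm_all _ (perm_canon_words va_l sum_l u_in)) content_word_take_lt.
by rewrite (perm_all _ (perm_canon_words va_r sum_r v_in)) content_word_rletters_ge.
Qed.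

Lemma uniq_flatten_map (S T : eqType) (s : seq S) (F : S -> seq T) :
  uniq s -> {in s, forall x, uniq (F x)} ->
  (forall x1 x2 y, x1 \in s -> x2 \in s -> y \in F x1 -> y \in F x2 -> x1 = x2) ->
  uniq (flatten [seq F x | x <- s]).
Proof.
elim: s => [|x s IHs] //= /andP[x_notin uniq_s] uniq_F disj_F.
rewrite cat_uniq uniq_F ?mem_head //= IHs //; last first.
- by move=> x1 x2 y x1_in x2_in; apply: disj_F; rewrite inE ?x1_in ?x2_in orbT.
- by move=> x1 x1_in; apply: uniq_F; rewrite inE x1_in orbT.
rewrite andbT; apply/hasPn => y /flatten_mapP[x' x'_in y_in']; apply/negP => y_in.
by move: x_notin; rewrite (disj_F x x' y) ?mem_head ?inE ?x'_in ?orbT.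
Qed.

Lemma uniq_canon_words n idx a : valid_content idx a -> (sumn a <= n)%N ->
  uniq (canon_words n idx a).
Proof.
move: n idx a; apply: canon_words_ind => [n idx | n idx x a va sum_a IH].
  by rewrite canon_words_nil.
have [size_idx sorted_idx _] := va.
rewrite canon_words_cons; apply: uniq_flatten_map; first exact: iota_uniq.
  move=> r; rewrite mem_iota => /andP[_ lt_r].
  have [va_l sum_l _ _] := canon_words_sub va sum_a lt_r.
  have [uniq_l uniq_r] := IH r lt_r.
  apply: allpairs_uniq => // -[u1 v1] [u2 v2] /allpairsP[[u1' v1'] [/= u1_in _ [-> ->]]].
  move=> /allpairsP[[u2' v2'] [/= u2_in _ [-> ->]]] /= [/eqP].
  rewrite eqseq_cat => [/andP[/eqP-> /eqP->] // |].
  by rewrite !(perm_size (perm_canon_words va_l sum_l _)).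
move=> r1 r2 w; rewrite !mem_iota !add0n => /andP[_ lt_r1] /andP[_ lt_r2].
move=> /allpairsP[[u1 v1] [_ _ ->]] /allpairsP[[u2 v2] [_ _ [nth_eq _]]].
apply: (uniqP 0%N (sorted_uniq ltn_trans ltnn sorted_idx)) => //; by rewrite inE size_idx.
Qed.

Lemma size_canon_words n idx a : valid_content idx a -> (sumn a <= n)%N ->
  (size (canon_words n idx a))%:Z = nbst a.
Proof.
move: n idx a; apply: canon_words_ind => [n idx | n idx x a [_ _ a_gt0] _ IH].
  by rewrite canon_words_nil.
rewrite canon_words_cons size_flatten /shape -map_comp sumnE big_map -natz natr_sum.
rewrite nbst_rec // -(big_mkord xpredT (fun r => nbst (take r _) * nbst (rcontent r _))).
rewrite /index_iota subn0; apply: eq_big_seq => r; rewrite mem_iota => /andP[_ lt_r].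
have [size_l size_r] := IH r lt_r.
by rewrite /= size_allpairs natrM !natz size_l size_r.
Qed.

Lemma canon_words_cover n idx a : valid_content idx a -> (sumn a <= n)%N ->
  forall w, perm_eq w (content_word idx a) ->
  exists2 c, c \in canon_words n idx a & sylv_equiv w c.
Proof.
move: n idx a; apply: canon_words_ind => [n idx w | n idx x a va sum_a IH [|y w]].
- rewrite content_word_nil => /perm_nilP->.
  by exists [::]; [rewrite canon_words_nil mem_head | apply: rst_refl].
- have [size_idx _ /andP[x_gt0 _]] := va; move/perm_size/eqP.
  by rewrite (content_word_root size_idx (ltn0Sn _) x_gt0) size_cat addnS.
move=> perm_w; have [size_idx _ _] := va.
have /(mem_content_word_nth size_idx)[r lt_r y_eq] : y \in content_word idx (x :: a).
  by rewrite -(perm_mem perm_w) mem_head.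
have [cover_l cover_r] := IH r lt_r.
rewrite y_eq in perm_w.
have [perm_lt perm_ge] := perm_content_word_partition va lt_r perm_w.
rewrite -y_eq in perm_lt perm_ge.
have [u u_in equiv_u] := cover_l _ perm_lt.
have [v v_in equiv_v] := cover_r _ perm_ge.
exists (y :: u ++ v); first by apply/mem_canon_wordsP; exists r, u, v; rewrite y_eq.
apply: rst_trans (sylv_equiv_cons_partition y w) _.
apply: rst_trans (sylv_equiv_cat [:: y] [seq z <- w | y <= z]%N equiv_u) _.
by have := sylv_equiv_cat (y :: u) [::] equiv_v; rewrite !cats0.
Qed.


Theorem corollary4p12 (alpha idx : seq nat) :
  (0 < size alpha)%N ->
  all (fun a => 0 < a)%N alpha ->
  size idx = size alpha ->
  sorted ltn idx ->
  all (fun x => 0 < x)%N idx ->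
  exists N : nat,
    num_classes (fun w => perm_eq w (content_word idx alpha)) N /\
    (N%:Z = \det (cor_matrix alpha))%R.
Proof.
move=> _ alpha_gt0 size_idx sorted_idx _.
have va : valid_content idx alpha by [].
have fuel := leqnn (sumn alpha).
set C := canon_words (sumn alpha) idx alpha.
exists (size C); split; last by rewrite size_canon_words // det_cor_matrix.
exists C; split=> //; [exact: perm_canon_words | | exact: canon_words_cover].
move=> i j lt_i lt_j neq_ij /bst_sylv_equiv bst_eq; apply: neq_ij; apply/eqP.
rewrite -(nth_uniq [::] lt_i lt_j (uniq_canon_words va fuel)).
by rewrite -(canon_words_preorder va fuel (mem_nth _ lt_i)) bst_eq
  (canon_words_preorder va fuel (mem_nth _ lt_j)).
Qed.
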